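(* Let $l,m,n$ be positive integers with $l\le\min\{m,n\}$, and let $x,y,z$ be complex numbers with $x+y+z=1$. Then $$(-1)^m\sum_{k=0}^m\binom mk\binom{n+k}{l-1}B_{n-l+k+1}(x)E_{m-k}(z)+(-1)^{n-l}\sum_{k=0}^n\binom nk\binom{m+k}{l-1}B_{m-l+k+1}(y)E_{n-k}(z)=-\frac l2\sum_{k=0}^l(-1)^k\binom mk\binom n{l-k}E_{n-l+k}(x)E_{m-k}(y),$$ $$\sum_{k=0}^{l}(-1)^k\binom mk\binom n{l-k}B_{m-k}(x)E_{n-l+k}(z)-(-1)^m\sum_{k=0}^m\binom mk\binom{n+k}{l}B_{m-k}(y)E_{n-l+k}(z)=(-1)^{n-l-1}\frac m2\sum^n_{k=\delta_{l,m}}\binom nk\binom{m+k-1}{l}E_{n-k}(y)E_{m-l-1+k}(x),$$ and $$\frac{(-1)^m}m\sum_{k=0}^m\binom mk\binom{n+k-1}{l-1}B_{n-l+k}(x)B_{m-k}(z)+(-1)^l\frac{(-1)^n}n\sum_{k=0}^n\binom nk\binom{m+k-1}{l-1}B_{m-l+k}(y)B_{n-k}(z)=\frac l{mn}\sum_{k=0}^l(-1)^k\binom mk\binom n{l-k}B_{n-l+k}(x)B_{m-k}(y).$$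
   Context: $\delta_{l,m}$ equals $1$ if $l=m$ and $0$ otherwise. Bernoulli numbers are defined by $B_0=1$ and $\sum_{k=0}^n\binom{n+1}kB_k=0$ for $n\ge1$; Euler numbers by $E_0=1$ and $\sum_{0\le k\le n,\,2\mid n-k}\binom nkE_k=0$ for $n\ge1$. The Bernoulli polynomials are $B_n(x)=\sum_{k=0}^n\binom nkB_kx^{n-k}$ and the Euler polynomials are $E_n(x)=\sum_{k=0}^n\binom nk\frac{E_k}{2^k}(x-\frac12)^{n-k}$. *)

From mathcomp Require Import all_boot all_order all_algebra.
From mathcomp Require Import reals.
From mathcomp Require Import complex.
Set Implicit Arguments. Unset Strict Implicit. Unset Printing Implicit Defensive.
Import Order.TTheory GRing.Theory Num.Theory.
Local Open Scope ring_scope.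

(* Bernoulli numbers: B_0 = 1, sum_{k=0}^n C(n+1,k) B_k = 0 for n >= 1,
   i.e. B_n = -(1/(n+1)) sum_{k<n} C(n+1,k) B_k.  bern_seq n = [B_0;...;B_n]. *)
Section Numbers.
Variable F : fieldType.

Fixpoint bern_seq (n : nat) : seq F :=
  match n with
  | 0 => [:: 1]
  | n'.+1 => let s := bern_seq n' in
      rcons s (- (\sum_(k < n'.+1) ('C(n'.+2, k))%:R * s`_k) / (n'.+2)%:R)
  end.

Definition bernoulli (n : nat) : F := (bern_seq n)`_n.

(* Euler numbers: E_0 = 1, sum_{0<=k<=n, n-k even} C(n,k) E_k = 0 for n >= 1,
   i.e. E_n = - sum_{k<n, n-k even} C(n,k) E_k. *)
Fixpoint euler_seq (n : nat) : seq F :=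
  match n with
  | 0 => [:: 1]
  | n'.+1 => let s := euler_seq n' in
      rcons s (- \sum_(k < n'.+1 | ~~ odd (n'.+1 - k)) ('C(n'.+1, k))%:R * s`_k)
  end.

Definition euler (n : nat) : F := (euler_seq n)`_n.

Definition bernoulliP (n : nat) (x : F) : F :=
  \sum_(k < n.+1) ('C(n, k))%:R * bernoulli k * x ^+ (n - k).

Definition eulerP (n : nat) (x : F) : F :=
  \sum_(k < n.+1) ('C(n, k))%:R * (euler k / 2%:R ^+ k) * (x - 2%:R^-1) ^+ (n - k).

End Numbers.

(* Write B_n(x) = L_B((X + x)^n) and E_n(x) = L_E((X + x)^n), where L_B and L_E are
   the linear functionals X^i |-> B_i and X^i |-> E_i(0) on polynomials.  The defining
   recurrences become L_B(p(X + 1)) = L_B(p) + p'(0) and L_E(p(X + 1)) + L_E(p) = 2 p(0).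
   A family f_n(a) with f_n(a + 1) = sum_k C(n,k) f_(n-k)(a), as for Appell
   polynomials, vanishes as soon as it is 1-periodic or 1-antiperiodic in a.  This
   yields the reflection formulas and three closed forms for the umbral convolutions
   L_D((X + a)^n C_m(b - X)).  Expanding C_m(b - X) by reflection around
   1 - a - b = z and putting a = x + t, b = y - t turns each of them into a polynomial
   identity in t; the three formulas are its coefficients of t^(l-1), t^l and t^(l-1)
   respectively. *)

From HB Require Import structures.
From mathcomp Require Import all_boot all_order all_algebra.
From mathcomp Require Import reals complex.
From mathcomp Require Import ring zify.
Set Implicit Arguments. Unset Strict Implicit. Unset Printing Implicit Defensive.
Import Order.TTheory GRing.Theory Num.Theory.
Local Open Scope ring_scope.

Section Umbral.
Variable R : numDomainType.
Implicit Types (c d : nat -> R) (p q : {poly R}) (x s t u v : R).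

Lemma poly_horner_eq p q : (forall t, p.[t] = q.[t]) -> p = q.
Proof.
move=> pq; apply/eqP; rewrite -subr_eq0; apply/eqP.
apply: (@roots_geq_poly_eq0 _ _ [seq i%:R | i <- iota 0 (size (p - q))]).
- by apply/allP => _ /mapP [i _ ->]; rewrite /root hornerD hornerN pq subrr.
- by rewrite map_inj_uniq ?iota_uniq // => i j /eqP; rewrite eqr_nat => /eqP.
- by rewrite size_map size_iota.
Qed.

Lemma horner1 t : (1 : {poly R}).[t] = 1.
Proof. by rewrite -polyC1 hornerC. Qed.

Definition umbral c p : R := \sum_(i < size p) p`_i * c i.

Lemma umbral_wide c p N : (size p <= N)%N -> umbral c p = \sum_(i < N) p`_i * c i.
Proof.
move=> le_pN; rewrite /umbral (big_ord_widen N (fun i => p`_i * c i) le_pN).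
rewrite [RHS](bigID (fun i : 'I_N => (i < size p)%N)) /= [X in _ = _ + X]big1 ?addr0 //.
by move=> i; rewrite -leqNgt => le_pi; rewrite nth_default // mul0r.
Qed.

Fact umbral_is_scalar c : scalar (umbral c).
Proof.
move=> a p q; set N := maxn (size p) (size q).
have le_pN : (size p <= N)%N by rewrite leq_maxl.
have le_qN : (size q <= N)%N by rewrite leq_maxr.
have le_apqN : (size (a *: p + q)%R <= N)%N.
  by rewrite (leq_trans (size_polyD _ _)) // geq_max le_qN (leq_trans (size_scale_leq _ _)).
rewrite !(umbral_wide c le_pN, umbral_wide c le_qN, umbral_wide c le_apqN).
rewrite mulr_sumr -big_split; apply: eq_bigr => i _.
by rewrite coefD coefZ mulrDl mulrA.
Qed.

HB.instance Definition _ c :=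
  GRing.isLinear.Build R {poly R} R *%R (umbral c) (umbral_is_scalar c).

Lemma umbralXn c k : umbral c 'X^k = c k.
Proof.
rewrite (umbral_wide c (eq_leq (size_polyXn R k))) big_ord_recr /= coefXn eqxx.
by rewrite big1 ?add0r ?mul1r // => i _; rewrite coefXn ltn_eqF // mul0r.
Qed.

Lemma umbral_coef j p : umbral (fun i => (i == j)%:R) p = p`_j.
Proof.
have [lt_jp|le_pj] := ltnP j (size p); last first.
  rewrite nth_default // /umbral big1 // => i _.
  by rewrite ltn_eqF ?mulr0 // (leq_trans (ltn_ord i) le_pj).
rewrite /umbral (bigD1 (Ordinal lt_jp)) //= eqxx mulr1 big1 ?addr0 // => i.
by rewrite -val_eqE /= => /negbTE ->; rewrite mulr0.
Qed.

Lemma umbral_comp c p q : umbral c (p \Po q) = \sum_(i < size p) p`_i * umbral c (q ^+ i).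
Proof. by rewrite comp_polyE linear_sum; apply: eq_bigr => i _; rewrite linearZ. Qed.

Definition appell c n x := \sum_(k < n.+1) 'C(n, k)%:R * c k * x ^+ (n - k).

Lemma XaddC_expn x n :
  ('X + x%:P) ^+ n = \sum_(k < n.+1) ('C(n, k)%:R * x ^+ (n - k)) *: 'X^k.
Proof.
rewrite addrC exprDn; apply: eq_bigr => k _.
by rewrite -rmorphXn mul_polyC -scaler_nat scalerA mulrC.
Qed.

Lemma umbral_XaddC c n x : umbral c (('X + x%:P) ^+ n) = appell c n x.
Proof.
rewrite XaddC_expn linear_sum; apply: eq_bigr => k _.
by rewrite linearZ /= umbralXn; ring.
Qed.

Lemma appellD c n x h :
  appell c n (x + h) = \sum_(k < n.+1) 'C(n, k)%:R * h ^+ k * appell c (n - k) x.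
Proof.
rewrite -umbral_XaddC polyCD addrA exprDn linear_sum; apply: eq_bigr => k _.
by rewrite linearMn -rmorphXn mulrC mul_polyC linearZ /= umbral_XaddC mulr_natl; ring.
Qed.

Lemma appell0 c n : appell c n 0 = c n.
Proof.
rewrite /appell big_ord_recr /= subnn expr0 binn mul1r mulr1 big1 ?add0r // => k _.
by rewrite expr0n subn_eq0 leqNgt ltn_ord mulr0.
Qed.

Lemma appell_rev c n x :
  appell c n x = \sum_(k < n.+1) 'C(n, k)%:R * x ^+ k * c (n - k)%N.
Proof.
rewrite /appell (reindex_inj rev_ord_inj) /=; apply: eq_bigr => k _.
by rewrite subKn ?bin_sub ?leq_ord //; ring.
Qed.

Lemma coef_sumXn (f : nat -> R) N j :
  (\sum_(k < N.+1) f k *: 'X^k)`_j = if (j < N.+1)%N then f j else 0.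
Proof.
rewrite coef_sum; case: ltnP => [lt_jN|le_Nj].
  rewrite (bigD1 (Ordinal lt_jN)) //= coefZ coefXn eqxx mulr1 big1 ?addr0 // => k.
  by rewrite -val_eqE /= coefZ coefXn eq_sym => /negbTE ->; rewrite mulr0.
by apply: big1 => k _; rewrite coefZ coefXn gtn_eqF ?mulr0 // (leq_trans (ltn_ord k)).
Qed.

Lemma coef_XaddC_expn x N j : (('X + x%:P) ^+ N)`_j = 'C(N, j)%:R * x ^+ (N - j).
Proof.
rewrite XaddC_expn (coef_sumXn (fun k => 'C(N, k)%:R * x ^+ (N - k))).
by case: ltnP => // le_Nj; rewrite bin_small // mul0r.
Qed.

Definition appell_poly c n : {poly R} :=
  \sum_(k < n.+1) ('C(n, k)%:R * c k) *: 'X^(n - k).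

Lemma horner_appell_poly c n t : (appell_poly c n).[t] = appell c n t.
Proof.
by rewrite horner_sum; apply: eq_bigr => k _; rewrite hornerZ hornerXn.
Qed.

Definition appell_aff c n x s : {poly R} := appell_poly c n \Po (x%:P + s *: 'X).

Lemma horner_appell_aff c n x s t : (appell_aff c n x s).[t] = appell c n (x + s * t).
Proof.
by rewrite horner_comp horner_appell_poly hornerD hornerC hornerZ hornerX.
Qed.

Lemma coef_appell_aff c n x s j :
  (appell_aff c n x s)`_j = 'C(n, j)%:R * s ^+ j * appell c (n - j) x.
Proof.
have -> : appell_aff c n x s =
    \sum_(k < n.+1) ('C(n, k)%:R * s ^+ k * appell c (n - k) x) *: 'X^k.
  apply: poly_horner_eq => t; rewrite horner_appell_aff appellD horner_sum.
  by apply: eq_bigr => k _; rewrite hornerZ hornerXn exprMn; ring.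
rewrite (coef_sumXn (fun k => 'C(n, k)%:R * s ^+ k * appell c (n - k) x)).
by case: ltnP => // le_nj; rewrite bin_small // !mul0r.
Qed.

Lemma coef_appell_poly c n j : (appell_poly c n)`_j = 'C(n, j)%:R * appell c (n - j) 0.
Proof.
have := coef_appell_aff c n 0 1 j.
by rewrite /appell_aff add0r scale1r comp_polyXr expr1n mulr1.
Qed.

Lemma deriv_appell_poly c n : (appell_poly c n)^`() = n%:R *: appell_poly c n.-1.
Proof.
apply/polyP => j; rewrite coef_deriv coefZ !coef_appell_poly.
case: n => [|n] /=; first by rewrite bin0n !mul0r mul0rn.
have binS : 'C(n.+1, j.+1)%:R * (j.+1)%:R = (n.+1)%:R * 'C(n, j)%:R :> R.
  by rewrite -!natrM mulnC mul_bin_diag.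
rewrite subSS -[_ *+ j.+1]mulr_natr mulrAC binS; ring.
Qed.

Lemma deriv_appell_aff c n x s :
  (appell_aff c n x s)^`() = (n%:R * s) *: appell_aff c n.-1 x s.
Proof.
rewrite /appell_aff deriv_comp deriv_appell_poly derivD derivC derivZ derivX add0r.
by rewrite comp_polyZ -scalerAr mulr1 scalerA mulrC.
Qed.

Lemma coef_appell_aff_mul c d N M u v l :
  (appell_aff c N u 1 * appell_aff d M v (-1))`_l = \sum_(k < l.+1)
    (-1) ^+ k * ('C(M, k) * 'C(N, l - k))%:R * appell c (N - (l - k)) u * appell d (M - k) v.
Proof.
rewrite coefMr; apply: eq_bigr => k _.
by rewrite !coef_appell_aff expr1n natrM; ring.
Qed.

End Umbral.

Definition horner_simp :=
  (hornerD, hornerN, hornerX, hornerC, horner1, horner_exp, hornerM, hornerZ, hornerXn).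

Section BinomialShift.
Variable R : numDomainType.
Implicit Types (f g : nat -> R -> R) (c : nat -> R).

Definition binomial_shift f :=
  forall n a, f n (a + 1) = \sum_(k < n.+1) 'C(n, k)%:R * f (n - k)%N a.

Lemma binomial_shiftD f g : binomial_shift f -> binomial_shift g ->
  binomial_shift (fun n a => f n a + g n a).
Proof.
by move=> sf sg n a; rewrite sf sg -big_split; apply: eq_bigr => k _; rewrite mulrDr.
Qed.

Lemma binomial_shiftN f : binomial_shift f -> binomial_shift (fun n a => - f n a).
Proof. by move=> sf n a; rewrite sf -sumrN; apply: eq_bigr => k _; rewrite mulrN. Qed.

Lemma binomial_shiftB f g : binomial_shift f -> binomial_shift g ->
  binomial_shift (fun n a => f n a - g n a).
Proof. by move=> sf sg; apply: binomial_shiftD sf (binomial_shiftN sg). Qed.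

Lemma binomial_shiftMl (u : R) f : binomial_shift f -> binomial_shift (fun n a => u * f n a).
Proof. by move=> sf n a; rewrite sf mulr_sumr; apply: eq_bigr => k _; ring. Qed.

Lemma binomial_shiftMr (u : R) f : binomial_shift f -> binomial_shift (fun n a => f n a * u).
Proof. by move=> sf n a; rewrite sf mulr_suml; apply: eq_bigr => k _; ring. Qed.

Lemma binomial_shift_pred f : binomial_shift f ->
  binomial_shift (fun n a => n%:R * f n.-1 a).
Proof.
move=> sf [|n] a /=; first by rewrite big_ord1 !mul0r mulr0.
rewrite sf [in RHS]big_ord_recr /= subnn mul0r mulr0 addr0 mulr_sumr.
by apply: eq_bigr => k _; rewrite mulrA -natrM mul_bin_down natrM subSn ?leq_ord //=; ring.
Qed.

Lemma binomial_shift_appell c : binomial_shift (appell c).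
Proof. by move=> n a; rewrite appellD; apply: eq_bigr => k _; rewrite expr1n mulr1. Qed.

Lemma sign_subn k N : (k <= N)%N -> (-1) ^+ (N - k) = (-1) ^+ N * (-1) ^+ k :> R.
Proof.
by move=> le_kN; rewrite -{2}(subnK le_kN) exprD -mulrA -expr2 sqrr_sign mulr1.
Qed.

Lemma binomial_shift_reflect c :
  binomial_shift (fun m u => (-1) ^+ m * appell c m (1 - u)).
Proof.
move=> m u; have -> : 1 - (u + 1) = (1 - u) + (-1) by ring.
rewrite appellD mulr_sumr; apply: eq_bigr => k _.
by rewrite sign_subn ?leq_ord //; ring.
Qed.

Lemma binomial_shift_antiperiodic_eq0 f : binomial_shift f ->
  (forall n a, f n (a + 1) = - f n a) -> forall n a, f n a = 0.
Proof.
move=> sf antif; elim/ltn_ind => n IHn a.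
have := sf n a; rewrite antif big_ord_recl subn0 bin0 mul1r big1 ?addr0 => [fN|k _].
  have f2 : f n a *+ 2 = 0 by rewrite mulr2n -{1}fN addNr.
  by move/eqP: f2; rewrite mulrn_eq0 /= => /eqP.
by rewrite IHn ?mulr0 //; have := ltn_ord k; rewrite lift0; lia.
Qed.

(* In [f (n.+1) (a + 1) - f (n.+1) a] only the term [n.+1 * f n a] survives the
   induction hypothesis. *)
Lemma binomial_shift_periodic_eq0 f : binomial_shift f ->
  (forall n a, f n (a + 1) = f n a) -> forall n a, f n a = 0.
Proof.
move=> sf perf; elim/ltn_ind => n IHn a.
have := sf n.+1 a; rewrite perf !big_ord_recl subn0 bin0 mul1r big1 ?addr0 => [|k _].
  move/eqP; rewrite -subr_eq0 opprD addrA subrr add0r oppr_eq0 lift0 bin1 subSS subn0.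
  by rewrite mulf_eq0 pnatr_eq0 /= => /eqP.
by rewrite IHn ?mulr0 //; have := ltn_ord k; rewrite !lift0; lia.
Qed.

End BinomialShift.

Section BernoulliEuler.
Variable F : numFieldType.
Implicit Types (p : {poly F}) (x u : F).
Local Notation B := (bernoulli F).
Local Notation E := (euler F).

Lemma bernoulliP_appell n x : bernoulliP n x = appell B n x.
Proof. by []. Qed.

Lemma size_bern_seq n : size (bern_seq F n) = n.+1.
Proof. by elim: n => //= n IHn; rewrite size_rcons IHn. Qed.

Lemma nth_bern_seq n k : (k <= n)%N -> (bern_seq F n)`_k = B k.
Proof.
elim: n => [|n IHn]; first by rewrite leqn0 => /eqP ->.
rewrite leq_eqVlt => /predU1P [-> //|lt_kn].
by rewrite /= nth_rcons size_bern_seq lt_kn IHn.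
Qed.

Lemma bernoulli_rec n : \sum_(k < n.+2) 'C(n.+2, k)%:R * B k = 0.
Proof.
rewrite big_ord_recr /= binSn {2}/bernoulli /= nth_rcons size_bern_seq ltnn eqxx.
rewrite (eq_bigr (fun k : 'I_n.+1 => 'C(n.+2, k)%:R * (bern_seq F n)`_k)).
  by rewrite mulrC divfK ?subrr // pnatr_eq0.
by move=> k _; rewrite nth_bern_seq ?leq_ord.
Qed.

Lemma bernoulliP1 k : appell B k 1 = B k + (k == 1%N)%:R.
Proof.
case: k => [|[|n]]; rewrite /appell.
- by rewrite big_ord1 addr0 !mul1r.
- by rewrite !big_ord_recr big_ord0 /= add0r bin0 bin1 !expr1n !mulr1 mul1r addrC.
rewrite big_ord_recr /= binn subnn mul1r mulr1 addr0.
under eq_bigr do rewrite expr1n mulr1.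
by rewrite bernoulli_rec add0r.
Qed.

Lemma umbralB_shift p : umbral B (p \Po ('X + 1)) = umbral B p + p`_1.
Proof.
rewrite umbral_comp; under eq_bigr do rewrite -polyC1 umbral_XaddC bernoulliP1.
by rewrite -umbral_coef /umbral -big_split; apply: eq_bigr => i _; rewrite mulrDr.
Qed.

Lemma bernoulliP_shift m x : appell B m (x + 1) = appell B m x + m%:R * x ^+ m.-1.
Proof.
have := umbralB_shift (('X + x%:P) ^+ m).
have -> : ('X + x%:P) ^+ m \Po ('X + 1) = ('X + (x + 1)%:P) ^+ m.
  by apply: poly_horner_eq => t; rewrite horner_comp !horner_simp; congr (_ ^+ _); ring.
by rewrite !umbral_XaddC coef_XaddC_expn bin1 subn1.
Qed.

Lemma signr_exprN n x : (-1) ^+ n * (- x) ^+ n = x ^+ n.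
Proof. by rewrite -exprMn mulN1r opprK. Qed.

Lemma bernoulliP_reflect m u : appell B m (1 - u) = (-1) ^+ m * appell B m u.
Proof.
pose D m u := (-1) ^+ m * appell B m (1 - u) - appell B m u.
suff /(_ m u)/eqP : forall m u, D m u = 0.
  by rewrite subr_eq0 => /eqP <-; rewrite mulrA -expr2 sqrr_sign mul1r.
apply: binomial_shift_periodic_eq0 => [|n a].
  exact: binomial_shiftB (binomial_shift_reflect B) (binomial_shift_appell B).
rewrite /D; have -> : 1 - (a + 1) = - a by ring.
have -> : 1 - a = - a + 1 by ring.
rewrite !bernoulliP_shift; case: n => [|n]; first by rewrite !mul0r !addr0.
by rewrite /= mulrDr mulrCA exprS !mulN1r !mulNr signr_exprN; ring.
Qed.

Lemma bernoulli_sign k : (-1) ^+ k * B k = B k + (k == 1%N)%:R.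
Proof.
have := bernoulliP_reflect k 0; rewrite subr0 bernoulliP1 => ->.
by rewrite appell0.
Qed.

Lemma expr_negX i : (- 'X) ^+ i = (-1) ^+ i *: 'X^i :> {poly F}.
Proof. by rewrite -scaleN1r exprZn. Qed.

Lemma umbralB_reflect p : umbral B (p \Po (- 'X)) = umbral B p + p`_1.
Proof.
rewrite umbral_comp; under eq_bigr do rewrite expr_negX linearZ /= umbralXn bernoulli_sign.
by rewrite -umbral_coef /umbral -big_split; apply: eq_bigr => i _; rewrite mulrDr.
Qed.

Lemma size_euler_seq n : size (euler_seq F n) = n.+1.
Proof. by elim: n => //= n IHn; rewrite size_rcons IHn. Qed.

Lemma nth_euler_seq n k : (k <= n)%N -> (euler_seq F n)`_k = E k.
Proof.
elim: n => [|n IHn]; first by rewrite leqn0 => /eqP ->.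
rewrite leq_eqVlt => /predU1P [-> //|lt_kn].
by rewrite /= nth_rcons size_euler_seq lt_kn IHn.
Qed.

Lemma eulerS n :
  E n.+1 = - \sum_(k < n.+1 | ~~ odd (n.+1 - k)) 'C(n.+1, k)%:R * E k.
Proof.
rewrite {1}/euler /= nth_rcons size_euler_seq ltnn eqxx.
by congr (- _); apply: eq_bigr => k _; rewrite nth_euler_seq ?leq_ord.
Qed.

Lemma euler_rec k :
  \sum_(i < k.+1) 'C(k, i)%:R * E i * (1 + (-1) ^+ (k - i)) = 2%:R * (k == 0%N)%:R.
Proof.
case: k => [|n]; first by rewrite big_ord1 /euler /= bin0 subnn expr0; ring.
rewrite big_ord_recr /= subnn expr0 binn mulr0.
rewrite (eq_bigr (fun i : 'I_n.+1 =>
  2%:R * (if ~~ odd (n.+1 - i) then 'C(n.+1, i)%:R * E i else 0))) => [|i _].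
  by rewrite -mulr_sumr -big_mkcond /= eulerS; ring.
by rewrite -signr_odd; case: (odd _); rewrite /= ?expr1 ?subrr; ring.
Qed.

Definition eulerP0 k : F := eulerP k 0.
Local Notation E0 := eulerP0.

Lemma eulerP_appell n x : eulerP n x = appell E0 n x.
Proof.
rewrite appell_rev -[eulerP n x]/(appell (fun k => E k / 2%:R ^+ k) n (x - 2%:R^-1)).
by rewrite addrC appellD; apply: eq_bigr => k _; rewrite /eulerP0 /eulerP sub0r.
Qed.

Lemma eulerP1 k : appell E0 k 1 + E0 k = 2%:R * (k == 0%N)%:R.
Proof.
rewrite -eulerP_appell /eulerP0 /eulerP -big_split /=.
set h : F := 2%:R^-1; have hh : 1 - h = h by rewrite /h; field.
rewrite (eq_bigr (fun i : 'I_k.+1 =>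
  h ^+ k * ('C(k, i)%:R * E i * (1 + (-1) ^+ (k - i))))) => [|i _].
  by rewrite -mulr_sumr euler_rec; case: k => [|k]; rewrite ?expr0 ?mul1r //= !mulr0.
have hk : h ^+ k = h ^+ i * h ^+ (k - i) by rewrite -exprD subnKC ?leq_ord.
by rewrite hh sub0r [(- h) ^+ _]exprNn -exprVn -/h hk; ring.
Qed.

Lemma umbralE_shift p : umbral E0 (p \Po ('X + 1)) + umbral E0 p = 2%:R * p`_0.
Proof.
rewrite umbral_comp; under eq_bigr do rewrite -polyC1 umbral_XaddC.
rewrite -umbral_coef /umbral mulr_sumr -big_split; apply: eq_bigr => i _ /=.
by rewrite -mulrDr eulerP1; ring.
Qed.

Lemma eulerP_shift m x : appell E0 m (x + 1) = 2%:R * x ^+ m - appell E0 m x.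
Proof.
have := umbralE_shift (('X + x%:P) ^+ m).
have -> : ('X + x%:P) ^+ m \Po ('X + 1) = ('X + (x + 1)%:P) ^+ m.
  by apply: poly_horner_eq => t; rewrite horner_comp !horner_simp; congr (_ ^+ _); ring.
by rewrite !umbral_XaddC coef_XaddC_expn bin0 subn0 mul1r => <-; rewrite addrK.
Qed.

Lemma eulerP_reflect m u : appell E0 m (1 - u) = (-1) ^+ m * appell E0 m u.
Proof.
pose D m u := (-1) ^+ m * appell E0 m (1 - u) - appell E0 m u.
suff /(_ m u)/eqP : forall m u, D m u = 0.
  by rewrite subr_eq0 => /eqP <-; rewrite mulrA -expr2 sqrr_sign mul1r.
apply: binomial_shift_antiperiodic_eq0 => [|n a].
  exact: binomial_shiftB (binomial_shift_reflect E0) (binomial_shift_appell E0).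
rewrite /D; have -> : 1 - (a + 1) = - a by ring.
have -> : 1 - a = - a + 1 by ring.
by rewrite !eulerP_shift mulrBr mulrCA signr_exprN; ring.
Qed.

Lemma eulerP0_sign k : (-1) ^+ k * E0 k = - E0 k + 2%:R * (k == 0%N)%:R.
Proof.
have := eulerP_reflect k 0; rewrite subr0 !appell0 => <-.
by rewrite -eulerP1 addrC addrK.
Qed.

Lemma umbralE_reflect p : umbral E0 (p \Po (- 'X)) = - umbral E0 p + 2%:R * p`_0.
Proof.
rewrite umbral_comp; under eq_bigr do rewrite expr_negX linearZ /= umbralXn eulerP0_sign.
rewrite -umbral_coef /umbral mulr_sumr -sumrN -big_split; apply: eq_bigr => i _ /=; ring.
Qed.

End BernoulliEuler.

Section Convolution.
Variable F : numFieldType.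
Implicit Types (c d : nat -> F) (a b t : F).
Local Notation B := (bernoulli F).
Local Notation E0 := (eulerP0 F).

(* The umbral form of "sum over t of D_n(a + t) C_m(b - t)": under [umbral d],
   [('X + a%:P) ^+ n] stands for D_n(a), and [appell_aff c m b (-1)] is C_m(b - 'X). *)
Definition conv d c n m a b := umbral d (('X + a%:P) ^+ n * appell_aff c m b (-1)).

Definition conv_pow d n m a b := umbral d (('X + a%:P) ^+ n * (b%:P - 'X) ^+ m).

Lemma horner_appell_aff_N1 c m b t : (appell_aff c m b (-1)).[t] = appell c m (b - t).
Proof. by rewrite horner_appell_aff mulN1r. Qed.

Lemma binomial_shift_conv_l d c m b : binomial_shift (fun n a => conv d c n m a b).
Proof.
move=> n a; rewrite /conv polyCD polyC1 addrA exprDn mulr_suml linear_sum.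
by apply: eq_bigr => k _; rewrite expr1n mulr1 [in LHS]mulrnAl linearMn mulr_natl.
Qed.

Lemma binomial_shift_conv_r d c n a : binomial_shift (fun m b => conv d c n m a b).
Proof.
move=> m b; rewrite /conv.
have -> : appell_aff c m (b + 1) (-1) =
    \sum_(k < m.+1) 'C(m, k)%:R *: appell_aff c (m - k) b (-1).
  apply: poly_horner_eq => t; rewrite horner_appell_aff_N1 horner_sum addrAC appellD.
  by apply: eq_bigr => k _; rewrite hornerZ horner_appell_aff_N1 expr1n mulr1.
rewrite mulr_sumr linear_sum; apply: eq_bigr => k _.
by rewrite -scalerAr linearZ.
Qed.

Lemma conv_shift_comp c n m a b :
  (('X + a%:P) ^+ n * appell_aff c m (b + 1) (-1)) \Po ('X + 1)
  = ('X + (a + 1)%:P) ^+ n * appell_aff c m b (-1).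
Proof.
apply: poly_horner_eq => t; rewrite horner_comp !horner_simp !horner_appell_aff_N1.
by congr (_ ^+ _ * appell c m _); ring.
Qed.

Lemma coef_expn_CsubX b m j :
  ((b%:P - 'X) ^+ m)`_j = 'C(m, j)%:R * (-1) ^+ j * b ^+ (m - j).
Proof.
have -> : (b%:P - 'X) ^+ m =
    \sum_(k < m.+1) ('C(m, k)%:R * (-1) ^+ k * b ^+ (m - k)) *: 'X^k.
  apply: poly_horner_eq => t; rewrite !horner_simp horner_sum exprDn.
  by apply: eq_bigr => k _; rewrite !horner_simp [(- t) ^+ _]exprNn; ring.
rewrite (coef_sumXn (fun k => 'C(m, k)%:R * (-1) ^+ k * b ^+ (m - k))).
by case: ltnP => // le_mj; rewrite bin_small // !mul0r.
Qed.

Lemma convB_shift c n m a b :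
  conv B c n m (a + 1) b = conv B c n m a (b + 1)
    + n%:R * a ^+ n.-1 * appell c m (b + 1) - m%:R * a ^+ n * appell c m.-1 (b + 1).
Proof.
rewrite /conv -conv_shift_comp umbralB_shift coefM !big_ord_recr big_ord0 /= add0r.
rewrite !coef_XaddC_expn !coef_appell_aff !subn0 !subnn !bin0 !bin1 !subn1 !expr0 !expr1.
ring.
Qed.

Lemma convE_shift c n m a b :
  conv E0 c n m (a + 1) b = - conv E0 c n m a (b + 1) + 2%:R * a ^+ n * appell c m (b + 1).
Proof.
have := umbralE_shift (('X + a%:P) ^+ n * appell_aff c m (b + 1) (-1)).
rewrite conv_shift_comp -/(conv E0 c n m (a + 1) b) -/(conv E0 c n m a (b + 1)).
rewrite -horner_coef0 !horner_simp horner_appell_aff_N1 add0r subr0 => shiftE.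
by apply: (addIr (conv E0 c n m a (b + 1))); rewrite shiftE; ring.
Qed.

Lemma conv_eulerP_shift d n m a b :
  conv d E0 n m a (b + 1) = 2%:R * conv_pow d n m a b - conv d E0 n m a b.
Proof.
rewrite /conv; have -> : appell_aff E0 m (b + 1) (-1) =
    2%:R *: (b%:P - 'X) ^+ m - appell_aff E0 m b (-1).
  apply: poly_horner_eq => t; rewrite !horner_simp !horner_appell_aff_N1.
  by rewrite -eulerP_shift; congr (appell _ _ _); ring.
by rewrite /conv_pow mulrBr linearB -scalerAr linearZ.
Qed.

Lemma conv_bernoulliP_shift d n m a b :
  conv d B n m a (b + 1) = conv d B n m a b + m%:R * conv_pow d n m.-1 a b.
Proof.
rewrite /conv; have -> : appell_aff B m (b + 1) (-1) =
    appell_aff B m b (-1) + m%:R *: (b%:P - 'X) ^+ m.-1.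
  apply: poly_horner_eq => t; rewrite !horner_simp !horner_appell_aff_N1.
  by rewrite -bernoulliP_shift; congr (appell _ _ _); ring.
by rewrite /conv_pow mulrDr linearD -scalerAr linearZ.
Qed.

Lemma conv_pow_reflect_comp n m a b :
  (('X + a%:P) ^+ n * (b%:P - 'X) ^+ m) \Po (- 'X) = ('X + b%:P) ^+ m * (a%:P - 'X) ^+ n.
Proof.
apply: poly_horner_eq => t; rewrite horner_comp !horner_simp mulrC.
by congr (_ ^+ _ * _ ^+ _); ring.
Qed.

Lemma conv_powB_reflect n m a b : conv_pow B m n b a =
  conv_pow B n m a b + n%:R * a ^+ n.-1 * b ^+ m - m%:R * a ^+ n * b ^+ m.-1.
Proof.
rewrite /conv_pow -conv_pow_reflect_comp umbralB_reflect coefM.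
rewrite !big_ord_recr big_ord0 /= add0r !coef_XaddC_expn !coef_expn_CsubX.
rewrite !subn0 !subnn !bin0 !bin1 !subn1 !expr0 !expr1; ring.
Qed.

Lemma conv_powE_reflect n m a b :
  conv_pow E0 m n b a = - conv_pow E0 n m a b + 2%:R * a ^+ n * b ^+ m.
Proof.
rewrite /conv_pow -conv_pow_reflect_comp umbralE_reflect -horner_coef0 !horner_simp.
by rewrite add0r subr0 mulrA.
Qed.

End Convolution.

Section ConvolutionIdentities.
Variable F : numFieldType.
Implicit Types (a b z : F).
Local Notation B := (bernoulli F).
Local Notation E0 := (eulerP0 F).

Lemma convBE_swap n m a b : conv B E0 n m a b - conv B E0 m n b a =
  2%:R^-1 * (m%:R * appell E0 n a * appell E0 m.-1 b
             - n%:R * appell E0 n.-1 a * appell E0 m b).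
Proof.
pose D n a := conv B E0 n m a b - conv B E0 m n b a
  - 2%:R^-1 * (m%:R * appell E0 n a * appell E0 m.-1 b
               - n%:R * appell E0 n.-1 a * appell E0 m b).
suff /(_ n a)/eqP : forall n a, D n a = 0 by rewrite subr_eq0 => /eqP.
apply: binomial_shift_antiperiodic_eq0 => [|k x].
  apply: binomial_shiftB; first exact: binomial_shiftB
    (binomial_shift_conv_l _ _ _ _) (binomial_shift_conv_r _ _ _ _).
  apply/binomial_shiftMl/binomial_shiftB; apply: binomial_shiftMr.
    exact/binomial_shiftMl/binomial_shift_appell.
  exact/binomial_shift_pred/binomial_shift_appell.
by rewrite /D convB_shift !conv_eulerP_shift conv_powB_reflect !eulerP_shift; field.
Qed.

Lemma convEB_split n m a z : conv E0 B n m z a =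
  appell B m a * appell E0 n z + 2%:R^-1 * (m%:R * conv E0 E0 m.-1 n a z).
Proof.
pose D m a := appell B m a * appell E0 n z - conv E0 B n m z a
  + 2%:R^-1 * (m%:R * conv E0 E0 m.-1 n a z).
suff /(_ m a) : forall m a, D m a = 0.
  by rewrite /D addrAC => /eqP; rewrite subr_eq0 => /eqP.
apply: binomial_shift_periodic_eq0 => [|k x].
  apply: binomial_shiftD; first apply: binomial_shiftB.
  - exact/binomial_shiftMr/binomial_shift_appell.
  - exact: binomial_shift_conv_r.
  apply/binomial_shiftMl/(@binomial_shift_pred _ (fun k x => conv E0 E0 k n x z)).
  exact: binomial_shift_conv_l.
rewrite /D bernoulliP_shift conv_bernoulliP_shift convE_shift conv_eulerP_shift.
by rewrite conv_powE_reflect !eulerP_shift; field.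
Qed.

Lemma convBB_swap n m a b :
  n%:R * conv B B n.-1 m a b - m%:R * conv B B m.-1 n b a =
  n%:R * appell B n.-1 a * appell B m b - m%:R * appell B n a * appell B m.-1 b.
Proof.
pose D n a := n%:R * conv B B n.-1 m a b - m%:R * conv B B m.-1 n b a
  - (n%:R * appell B n.-1 a * appell B m b - m%:R * appell B n a * appell B m.-1 b).
suff /(_ n a)/eqP : forall n a, D n a = 0 by rewrite subr_eq0 => /eqP.
apply: binomial_shift_periodic_eq0 => [|k x].
  apply: binomial_shiftB; apply: binomial_shiftB.
  - apply: (@binomial_shift_pred _ (fun k x => conv B B k m x b)).
    exact: binomial_shift_conv_l.
  - exact/binomial_shiftMl/binomial_shift_conv_r.
  - exact/binomial_shiftMr/binomial_shift_pred/binomial_shift_appell.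
  - exact/binomial_shiftMr/binomial_shiftMl/binomial_shift_appell.
rewrite /D convB_shift !conv_bernoulliP_shift conv_powB_reflect !bernoulliP_shift; ring.
Qed.

End ConvolutionIdentities.

Section SeriesIdentities.
Variable F : numFieldType.
Implicit Types (c d : nat -> F) (a b s t x y z : F).
Local Notation B := (bernoulli F).
Local Notation E0 := (eulerP0 F).

Lemma conv_expand d c n m a b :
  (forall j u, appell c j (1 - u) = (-1) ^+ j * appell c j u) ->
  conv d c n m a b = (-1) ^+ m *
    \sum_(k < m.+1) 'C(m, k)%:R * appell c (m - k) (1 - a - b) * appell d (n + k) a.
Proof.
move=> c_reflect; rewrite /conv.
have -> : appell_aff c m b (-1) = (-1) ^+ m *:
    \sum_(k < m.+1) ('C(m, k)%:R * appell c (m - k) (1 - a - b)) *: ('X + a%:P) ^+ k.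
  apply: poly_horner_eq => t; rewrite horner_appell_aff_N1 hornerZ horner_sum.
  have -> : b - t = 1 - ((1 - a - b) + (t + a)) by ring.
  rewrite c_reflect appellD; congr (_ * _); apply: eq_bigr => k _.
  by rewrite !horner_simp; ring.
rewrite -scalerAr linearZ mulr_sumr linear_sum; congr (_ * _); apply: eq_bigr => k _.
by rewrite -scalerAr linearZ /= -exprD umbral_XaddC.
Qed.

Definition conv_series d c n m z x s : {poly F} :=
  \sum_(k < m.+1) ('C(m, k)%:R * appell c (m - k) z) *: appell_aff d (n + k) x s.

Lemma horner_conv_series d c n m z x s t : (conv_series d c n m z x s).[t] =
  \sum_(k < m.+1) 'C(m, k)%:R * appell c (m - k) z * appell d (n + k) (x + s * t).
Proof.
by rewrite horner_sum; apply: eq_bigr => k _; rewrite hornerZ horner_appell_aff.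
Qed.

Lemma coef_conv_series d c n m z x s j : (conv_series d c n m z x s)`_j = s ^+ j *
  \sum_(k < m.+1) ('C(m, k) * 'C(n + k, j))%:R * appell c (m - k) z * appell d (n + k - j) x.
Proof.
rewrite coef_sum mulr_sumr; apply: eq_bigr => k _.
by rewrite coefZ coef_appell_aff natrM; ring.
Qed.

Lemma horner_conv_series_conv x y z c : x + y + z = 1 ->
  (forall j u, appell c j (1 - u) = (-1) ^+ j * appell c j u) -> forall d n m s t,
  (-1) ^+ m * (conv_series d c n m z x s).[t] = conv d c n m (x + s * t) (y - s * t).
Proof.
move=> xyz c_reflect d n m s t; rewrite conv_expand // horner_conv_series.
by have -> : 1 - (x + s * t) - (y - s * t) = z by rewrite -xyz; ring.
Qed.

Lemma convBE_series_identity n m x y z : x + y + z = 1 ->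
  (-1) ^+ m *: conv_series B E0 n m z x 1 - (-1) ^+ n *: conv_series B E0 m n z y (-1)
  = - 2%:R^-1 *: (appell_aff E0 n x 1 * appell_aff E0 m y (-1))^`().
Proof.
move=> xyz; have yxz : y + x + z = 1 by rewrite -xyz; ring.
apply: poly_horner_eq => t; rewrite hornerD hornerN !hornerZ.
rewrite (horner_conv_series_conv xyz (@eulerP_reflect F)).
rewrite (horner_conv_series_conv yxz (@eulerP_reflect F)) mul1r mulN1r opprK.
rewrite convBE_swap derivM !deriv_appell_aff !horner_simp !horner_appell_aff.
by rewrite !mul1r !mulN1r; ring.
Qed.

Lemma convEB_series_identity n m x y z : x + y + z = 1 ->
  appell_aff E0 n z 1 * appell_aff B m x (-1) - (-1) ^+ m *: conv_series E0 B n m y z 1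
  + (2%:R^-1 * m%:R * (-1) ^+ n) *: conv_series E0 E0 m.-1 n y x (-1) = 0.
Proof.
move=> xyz; have zxy : z + x + y = 1 by rewrite -xyz; ring.
have xzy : x + z + y = 1 by rewrite -xyz; ring.
apply: poly_horner_eq => t; rewrite horner0 !hornerD hornerN hornerM !hornerZ -!mulrA.
rewrite (horner_conv_series_conv zxy (@bernoulliP_reflect F)).
rewrite (horner_conv_series_conv xzy (@eulerP_reflect F)) mul1r mulN1r opprK.
by rewrite convEB_split !horner_appell_aff mul1r mulN1r; ring.
Qed.

Lemma convBB_series_identity n m x y z : x + y + z = 1 ->
  (n%:R * (-1) ^+ m) *: conv_series B B n.-1 m z x 1
  - (m%:R * (-1) ^+ n) *: conv_series B B m.-1 n z y (-1)
  = (appell_aff B n x 1 * appell_aff B m y (-1))^`().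
Proof.
move=> xyz; have yxz : y + x + z = 1 by rewrite -xyz; ring.
apply: poly_horner_eq => t; rewrite hornerD hornerN !hornerZ -!mulrA.
rewrite (horner_conv_series_conv xyz (@bernoulliP_reflect F)).
rewrite (horner_conv_series_conv yxz (@bernoulliP_reflect F)) mul1r mulN1r opprK.
rewrite convBB_swap derivM !deriv_appell_aff !horner_simp !horner_appell_aff.
by rewrite !mul1r !mulN1r; ring.
Qed.

End SeriesIdentities.

Section CoefficientIdentities.
Variable F : numFieldType.
Implicit Types (x y z : F).
Local Notation B := (bernoulli F).
Local Notation E0 := (eulerP0 F).

Lemma sum_BE_eq_sum_EE l m n x y z :
  (0 < l)%N -> (l <= m)%N -> (l <= n)%N -> x + y + z = 1 ->
   (-1) ^+ m * \sum_(k < m.+1) ('C(m, k) * 'C(n + k, l.-1))%:R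
        * bernoulliP (n - l + k + 1) x * eulerP (m - k) z
   + (-1) ^+ (n - l) * \sum_(k < n.+1) ('C(n, k) * 'C(m + k, l.-1))%:R
        * bernoulliP (m - l + k + 1) y * eulerP (n - k) z
   = - (l%:R / 2%:R) * \sum_(k < l.+1) (-1) ^+ k * ('C(m, k) * 'C(n, l - k))%:R
        * eulerP (n - l + k) x * eulerP (m - k) y.
Proof.
case: l => [//|l] _ le_lm le_ln xyz.
have := congr1 (fun p : {poly F} => p`_l) (convBE_series_identity n m xyz).
rewrite /= coefB !coefZ !coef_conv_series coef_deriv coef_appell_aff_mul expr1n mul1r.
have sum1 : \sum_(k < m.+1) ('C(m, k) * 'C(n + k, l))%:R
      * bernoulliP (n - l.+1 + k + 1) x * eulerP (m - k) z
    = \sum_(k < m.+1) ('C(m, k) * 'C(n + k, l))%:R * appell E0 (m - k) z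
      * appell B (n + k - l) x.
  apply: eq_bigr => k _; rewrite eulerP_appell bernoulliP_appell mulrAC.
  by congr (_ * appell _ _ _); lia.
have sum2 : \sum_(k < n.+1) ('C(n, k) * 'C(m + k, l))%:R
      * bernoulliP (m - l.+1 + k + 1) y * eulerP (n - k) z
    = \sum_(k < n.+1) ('C(n, k) * 'C(m + k, l))%:R * appell E0 (n - k) z
      * appell B (m + k - l) y.
  apply: eq_bigr => k _; rewrite eulerP_appell bernoulliP_appell mulrAC.
  by congr (_ * appell _ _ _); lia.
have sum3 : \sum_(k < l.+2) (-1) ^+ k * ('C(m, k) * 'C(n, l.+1 - k))%:R
      * eulerP (n - l.+1 + k) x * eulerP (m - k) y
    = \sum_(k < l.+2) (-1) ^+ k * ('C(m, k) * 'C(n, l.+1 - k))%:R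
      * appell E0 (n - (l.+1 - k)) x * appell E0 (m - k) y.
  apply: eq_bigr => k _; rewrite !eulerP_appell.
  by congr (_ * appell _ _ _ * _); have := leq_ord k; lia.
rewrite sum1 sum2 sum3 sign_subn // exprS => id_coef.
by apply: etrans _ (etrans id_coef _); ring.
Qed.

Lemma diff_BE_eq_sum_EE l m n x y z :
  (0 < l)%N -> (l <= m)%N -> (l <= n)%N -> x + y + z = 1 ->
   \sum_(k < l.+1) (-1) ^+ k * ('C(m, k) * 'C(n, l - k))%:R
        * bernoulliP (m - k) x * eulerP (n - l + k) z
   - (-1) ^+ m * \sum_(k < m.+1) ('C(m, k) * 'C(n + k, l))%:R
        * bernoulliP (m - k) y * eulerP (n - l + k) z
   = (-1) ^+ (n - l + 1) * (m%:R / 2%:R)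
        * \sum_((l == m) <= k < n.+1) ('C(n, k) * 'C(m + k - 1, l))%:R
        * eulerP (n - k) y * eulerP (m + k - l - 1) x.
Proof.
move=> lt0l le_lm le_ln xyz.
have := congr1 (fun p : {poly F} => p`_l) (convEB_series_identity n m xyz).
rewrite /= coef0 !coefD coefN !coefZ !coef_conv_series coef_appell_aff_mul.
rewrite expr1n mul1r.
have sum1 : \sum_(k < l.+1) (-1) ^+ k * ('C(m, k) * 'C(n, l - k))%:R
      * bernoulliP (m - k) x * eulerP (n - l + k) z
    = \sum_(k < l.+1) (-1) ^+ k * ('C(m, k) * 'C(n, l - k))%:R
      * appell E0 (n - (l - k)) z * appell B (m - k) x.
  apply: eq_bigr => k _; rewrite eulerP_appell bernoulliP_appell mulrAC.
  by congr (_ * appell _ _ _ * _); have := leq_ord k; lia.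
have sum2 : \sum_(k < m.+1) ('C(m, k) * 'C(n + k, l))%:R
      * bernoulliP (m - k) y * eulerP (n - l + k) z
    = \sum_(k < m.+1) ('C(m, k) * 'C(n + k, l))%:R * appell B (m - k) y
      * appell E0 (n + k - l) z.
  apply: eq_bigr => k _; rewrite eulerP_appell bernoulliP_appell.
  by congr (_ * appell _ _ _); lia.
have sum3 : \sum_((l == m) <= k < n.+1) ('C(n, k) * 'C(m + k - 1, l))%:R
      * eulerP (n - k) y * eulerP (m + k - l - 1) x
    = \sum_(k < n.+1) ('C(n, k) * 'C(m.-1 + k, l))%:R * appell E0 (n - k) y
      * appell E0 (m.-1 + k - l) x.
  have term k : ('C(n, k) * 'C(m + k - 1, l))%:R * eulerP (n - k) y
      * eulerP (m + k - l - 1) x = ('C(n, k) * 'C(m.-1 + k, l))%:R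
      * appell E0 (n - k) y * appell E0 (m.-1 + k - l) x.
    by rewrite !eulerP_appell; congr ((_ * 'C(_, l))%:R * _ * appell _ _ _); lia.
  rewrite (eq_bigr _ (fun k _ => term k)).
  have [eq_lm|_] := eqVneq l m; last by rewrite big_mkord.
  rewrite big_add1 big_mkord [RHS]big_ord_recl /= addn0 (@bin_small m.-1 l).
    by rewrite muln0 !mul0r add0r.
  lia.
rewrite sum1 sum2 sum3 addn1 exprSr sign_subn // => id_coef.
by apply/eqP; rewrite -subr_eq0 -[X in _ == X]id_coef; apply/eqP; ring.
Qed.

Lemma sum_BB_eq_sum_BB l m n x y z :
  (0 < l)%N -> (l <= m)%N -> (l <= n)%N -> x + y + z = 1 ->
   (-1) ^+ m / m%:R * \sum_(k < m.+1) ('C(m, k) * 'C(n + k - 1, l.-1))%:R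
        * bernoulliP (n - l + k) x * bernoulliP (m - k) z
   + (-1) ^+ l * ((-1) ^+ n / n%:R) * \sum_(k < n.+1) ('C(n, k) * 'C(m + k - 1, l.-1))%:R
        * bernoulliP (m - l + k) y * bernoulliP (n - k) z
   = l%:R / (m * n)%:R * \sum_(k < l.+1) (-1) ^+ k * ('C(m, k) * 'C(n, l - k))%:R
        * bernoulliP (n - l + k) x * bernoulliP (m - k) y.
Proof.
case: l => [//|l] _ le_lm le_ln xyz.
have := congr1 (fun p : {poly F} => p`_l) (convBB_series_identity n m xyz).
rewrite /= coefB !coefZ !coef_conv_series coef_deriv coef_appell_aff_mul expr1n mul1r.
have sum1 : \sum_(k < m.+1) ('C(m, k) * 'C(n + k - 1, l))%:R
      * bernoulliP (n - l.+1 + k) x * bernoulliP (m - k) z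
    = \sum_(k < m.+1) ('C(m, k) * 'C(n.-1 + k, l))%:R * appell B (m - k) z
      * appell B (n.-1 + k - l) x.
  apply: eq_bigr => k _; rewrite !bernoulliP_appell mulrAC.
  by congr ((_ * 'C(_, l))%:R * _ * appell _ _ _); lia.
have sum2 : \sum_(k < n.+1) ('C(n, k) * 'C(m + k - 1, l))%:R
      * bernoulliP (m - l.+1 + k) y * bernoulliP (n - k) z
    = \sum_(k < n.+1) ('C(n, k) * 'C(m.-1 + k, l))%:R * appell B (n - k) z
      * appell B (m.-1 + k - l) y.
  apply: eq_bigr => k _; rewrite !bernoulliP_appell mulrAC.
  by congr ((_ * 'C(_, l))%:R * _ * appell _ _ _); lia.
have sum3 : \sum_(k < l.+2) (-1) ^+ k * ('C(m, k) * 'C(n, l.+1 - k))%:R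
      * bernoulliP (n - l.+1 + k) x * bernoulliP (m - k) y
    = \sum_(k < l.+2) (-1) ^+ k * ('C(m, k) * 'C(n, l.+1 - k))%:R
      * appell B (n - (l.+1 - k)) x * appell B (m - k) y.
  apply: eq_bigr => k _; rewrite !bernoulliP_appell.
  by congr (_ * appell _ _ _ * _); have := leq_ord k; lia.
have m0 : m%:R != 0 :> F by rewrite pnatr_eq0 -lt0n (leq_trans _ le_lm).
have n0 : n%:R != 0 :> F by rewrite pnatr_eq0 -lt0n (leq_trans _ le_ln).
rewrite sum1 sum2 sum3 exprS natrM => id_coef.
apply: etrans _ (etrans (congr1 (fun w => w / (m%:R * n%:R)) id_coef) _).
  by field; rewrite m0 n0.
by field; rewrite m0 n0.
Qed.

End CoefficientIdentities.

Theorem theorem1p2 (R : realType) (l m n : nat) (x y z : R[i]) :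
  (0 < l)%N -> (0 < m)%N -> (0 < n)%N -> (l <= minn m n)%N -> x + y + z = 1 ->
  [/\
   (-1) ^+ m * \sum_(k < m.+1) ('C(m, k) * 'C(n + k, l.-1))%:R
        * bernoulliP (n - l + k + 1) x * eulerP (m - k) z
   + (-1) ^+ (n - l) * \sum_(k < n.+1) ('C(n, k) * 'C(m + k, l.-1))%:R
        * bernoulliP (m - l + k + 1) y * eulerP (n - k) z
   = - (l%:R / 2%:R) * \sum_(k < l.+1) (-1) ^+ k * ('C(m, k) * 'C(n, l - k))%:R
        * eulerP (n - l + k) x * eulerP (m - k) y,
   \sum_(k < l.+1) (-1) ^+ k * ('C(m, k) * 'C(n, l - k))%:R
        * bernoulliP (m - k) x * eulerP (n - l + k) z
   - (-1) ^+ m * \sum_(k < m.+1) ('C(m, k) * 'C(n + k, l))%:R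
        * bernoulliP (m - k) y * eulerP (n - l + k) z
   = (-1) ^+ (n - l + 1) * (m%:R / 2%:R)
        * \sum_((l == m) <= k < n.+1) ('C(n, k) * 'C(m + k - 1, l))%:R
        * eulerP (n - k) y * eulerP (m + k - l - 1) x
 & (-1) ^+ m / m%:R * \sum_(k < m.+1) ('C(m, k) * 'C(n + k - 1, l.-1))%:R
        * bernoulliP (n - l + k) x * bernoulliP (m - k) z
   + (-1) ^+ l * ((-1) ^+ n / n%:R) * \sum_(k < n.+1) ('C(n, k) * 'C(m + k - 1, l.-1))%:R
        * bernoulliP (m - l + k) y * bernoulliP (n - k) z
   = l%:R / (m * n)%:R * \sum_(k < l.+1) (-1) ^+ k * ('C(m, k) * 'C(n, l - k))%:R
        * bernoulliP (n - l + k) x * bernoulliP (m - k) y ].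
Proof.
move=> lt0l _ _; rewrite leq_min => /andP [le_lm le_ln] xyz.
split.
- exact: sum_BE_eq_sum_EE lt0l le_lm le_ln xyz.
- exact: diff_BE_eq_sum_EE lt0l le_lm le_ln xyz.
- exact: sum_BB_eq_sum_BB lt0l le_lm le_ln xyz.
Qed.
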